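(* If $\Gamma\vdash t:\Diamond$, then $\Gamma\neq\emptyset$. In particular, there is no closed term of type $\Diamond$, and every term of type $\Diamond$ has a free variable.
   Context: Types: $\rho,\tau::=\Diamond\mid\mathbf{B}\mid\tau\multimap\rho\mid\tau\otimes\rho\mid\tau\times\rho\mid\mathbf{L}(\tau)$. Raw terms: $r,s,t::=x^\tau\mid c\mid\lambda x^\tau.\,t\mid\langle t,s\rangle\mid ts\mid\{t\}$, where each variable $x^\tau$ carries a type (infinitely many variables of each type), application associates to the left, terms are identified up to renaming of bound variables ($\lambda$ is the only binder), and the constants $c$ with their types are $\mathsf{tt},\mathsf{ff}:\mathbf{B}$; $\mathsf{nil}_\tau:\mathbf{L}(\tau)$; $\mathsf{cons}_\tau:\Diamond\multimap\tau\multimap\mathbf{L}(\tau)\multimap\mathbf{L}(\tau)$; $\otimes_{\tau,\rho}:\tau\multimap\rho\multimap\tau\otimes\rho$. A context is a finite set of typed variables; $\Gamma_1,\Gamma_2$ denotes $\Gamma_1\cup\Gamma_2$ and presupposes $\Gamma_1\cap\Gamma_2=\emptyset$; $x^\tau$ also denotes $\{x^\tau\}$. The relation $\Gamma\vdash t:\tau$ is inductively defined by: (Var) $\Gamma,x^\tau\vdash x:\tau$; (Const) $\Gamma\vdash c:\tau$ for a constant $c$ of type $\tau$; ($\multimap^+$) from $\Gamma\cup\{x^\tau\}\vdash t:\rho$ infer $\Gamma\vdash\lambda x^\tau.t:\tau\multimap\rho$; ($\multimap^-$) from $\Gamma_1\vdash t:\tau\multimap\rho$ and $\Gamma_2\vdash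 s:\tau$ infer $\Gamma_1,\Gamma_2\vdash ts:\rho$; ($\times^+$) from $\Gamma\vdash t:\tau$ and $\Gamma\vdash s:\rho$ infer $\Gamma\vdash\langle t,s\rangle:\tau\times\rho$; ($\times^-_1$) from $\Gamma\vdash t:\tau\times\rho$ infer $\Gamma\vdash t\,\mathsf{tt}:\tau$; ($\times^-_0$) from $\Gamma\vdash t:\tau\times\rho$ infer $\Gamma\vdash t\,\mathsf{ff}:\rho$; ($\mathbf{B}^-$) from $\Gamma_1\vdash t:\mathbf{B}$, $\Gamma_2\vdash s:\tau$, $\Gamma_2\vdash r:\tau$ infer $\Gamma_1,\Gamma_2\vdash t\langle s,r\rangle:\tau$; ($\otimes^-$) from $\Gamma_1\vdash t:\tau\otimes\rho$ and $\Gamma_2,x^\tau,y^\rho\vdash s:\sigma$ infer $\Gamma_1,\Gamma_2\vdash t(\lambda x^\tau.\lambda y^\rho.s):\sigma$; ($\mathbf{L}^-$) from $\Gamma\vdash t:\mathbf{L}(\tau)$ and $\emptyset\vdash s:\Diamond\multimap\tau\multimap\rho\multimap\rho$ infer $\Gamma\vdash t\{s\}:\rho\multimap\rho$. *)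

From Stdlib Require Import List.
Import ListNotations.

Inductive ty : Type :=
| TDiamond : ty
| TBool : ty
| TLolli : ty -> ty -> ty
| TTensor : ty -> ty -> ty
| TProd : ty -> ty -> ty
| TList : ty -> ty.

(* A typed variable x^τ : a name (infinitely many per type) together with its type. *)
Definition var : Type := (nat * ty)%type.
Definition var_ty (x : var) : ty := snd x.

Inductive const : Type :=
| Ctt : const
| Cff : const
| Cnil : ty -> const
| Ccons : ty -> const
| Ctens : ty -> ty -> const.

Definition const_ty (c : const) : ty :=
  match c with
  | Ctt => TBool
  | Cff => TBool
  | Cnil t => TList t
  | Ccons t => TLolli TDiamond (TLolli t (TLolli (TList t) (TList t)))
  | Ctens t r => TLolli t (TLolli r (TTensor t r))
  end.

Inductive tm : Type :=
| Var : var -> tm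
| Const : const -> tm
| Lam : var -> tm -> tm
| Pair : tm -> tm -> tm
| App : tm -> tm -> tm
| Brace : tm -> tm.

Definition ty_eq_dec (a b : ty) : {a = b} + {a <> b}.
Proof. decide equality. Defined.

Definition var_eq_dec (x y : var) : {x = y} + {x <> y}.
Proof. decide equality; [apply ty_eq_dec | apply PeanoNat.Nat.eq_dec]. Defined.

Fixpoint fv (t : tm) : list var :=
  match t with
  | Var x => [x]
  | Const _ => []
  | Lam x t => filter (fun y => if var_eq_dec x y then false else true) (fv t)
  | Pair t s => fv t ++ fv s
  | App t s => fv t ++ fv s
  | Brace t => fv t
  end.

(* Contexts: finite sets of typed variables, represented by lists up to
   set-equality (membership is all that matters). *)
Definition ctx : Type := list var.

Definition disj_union (G G1 G2 : ctx) : Prop :=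
  (forall v, In v G <-> In v G1 \/ In v G2) /\
  (forall v, In v G1 -> ~ In v G2).

Inductive typing : ctx -> tm -> ty -> Prop :=
| T_Var : forall G x,
    In x G -> typing G (Var x) (var_ty x)
| T_Const : forall G c,
    typing G (Const c) (const_ty c)
| T_LamI : forall G G' x t r,
    (forall v, In v G' <-> v = x \/ In v G) ->
    typing G' t r ->
    typing G (Lam x t) (TLolli (var_ty x) r)
| T_LamE : forall G G1 G2 t s a r,
    disj_union G G1 G2 ->
    typing G1 t (TLolli a r) -> typing G2 s a ->
    typing G (App t s) r
| T_ProdI : forall G t s a r,
    typing G t a -> typing G s r ->
    typing G (Pair t s) (TProd a r)
| T_ProdE1 : forall G t a r,
    typing G t (TProd a r) ->
    typing G (App t (Const Ctt)) a
| T_ProdE0 : forall G t a r,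
    typing G t (TProd a r) ->
    typing G (App t (Const Cff)) r
| T_BoolE : forall G G1 G2 t s r a,
    disj_union G G1 G2 ->
    typing G1 t TBool -> typing G2 s a -> typing G2 r a ->
    typing G (App t (Pair s r)) a
| T_TensE : forall G G1 G2 G2' t s x y sg,
    disj_union G G1 G2 ->
    typing G1 t (TTensor (var_ty x) (var_ty y)) ->
    x <> y -> ~ In x G2 -> ~ In y G2 ->
    (forall v, In v G2' <-> v = x \/ v = y \/ In v G2) ->
    typing G2' s sg ->
    typing G (App t (Lam x (Lam y s))) sg
| T_ListE : forall G t s a r,
    typing G t (TList a) ->
    typing [] s (TLolli TDiamond (TLolli a (TLolli r r))) ->
    typing G (App t (Brace s)) (TLolli r r).

(* Read every type as a proposition, with ◇ as False, B and L(τ) as True, ⊸ as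
   implication and both products as conjunction.  Each constant then denotes a
   true proposition, and every typing rule is a valid inference, so a term of
   type τ proves τ from the propositions of its free variables.  A term of type
   ◇ therefore needs a free variable, which must occur in its context. *)
From Stdlib Require Import List.
Import ListNotations.

Fixpoint interp (a : ty) : Prop :=
  match a with
  | TDiamond => False
  | TBool => True
  | TLolli a r => interp a -> interp r
  | TTensor a r => interp a /\ interp r
  | TProd a r => interp a /\ interp r
  | TList _ => True
  end.

Lemma interp_const (c : const) : interp (const_ty c).
Proof. destruct c; simpl; tauto. Qed.

Lemma in_filter_neq_var (x v : var) (l : list var) :
  In v (filter (fun y => if var_eq_dec x y then false else true) l) <->
  In v l /\ v <> x.
Proof.
  rewrite filter_In.
  destruct (var_eq_dec x v); split; intros [hv hx]; subst; easy.
Qed.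

Lemma typing_fv_incl (G : ctx) (t : tm) (a : ty) :
  typing G t a -> incl (fv t) G.
Proof.
  induction 1; intros v hv; simpl in *;
    repeat rewrite in_app_iff in hv; repeat rewrite in_filter_neq_var in hv.
  - destruct hv as [<- | []]; assumption.
  - contradiction.
  - destruct hv as [hv hx]. apply IHtyping, H in hv as [-> | hv]; tauto.
  - apply H; destruct hv; auto.
  - destruct hv; auto.
  - destruct hv as [hv | []]; auto.
  - destruct hv as [hv | []]; auto.
  - apply H; destruct hv as [hv | [hv | hv]]; auto.
  - apply H. destruct hv as [hv | [[hv hy] hx]]; auto.
    apply IHtyping2, H4 in hv as [-> | [-> | hv]]; tauto.
  - destruct hv as [hv | hv]; auto. apply IHtyping2 in hv as [].
Qed.

Lemma typing_sound (G : ctx) (t : tm) (a : ty) :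
  typing G t a -> (forall v, In v (fv t) -> interp (var_ty v)) -> interp a.
Proof.
  induction 1; intro hfv; simpl in *;
    try setoid_rewrite in_app_iff in hfv.
  - auto.
  - apply interp_const.
  - intro hx. apply IHtyping. intros v hv.
    destruct (var_eq_dec v x) as [-> | nx]; auto.
    apply hfv, in_filter_neq_var; auto.
  - apply IHtyping1; auto.
  - split; auto.
  - apply IHtyping; auto.
  - apply IHtyping; auto.
  - apply IHtyping2; intros v hv; apply hfv; simpl; rewrite in_app_iff; auto.
  - destruct IHtyping1 as [hx hy]; auto.
    apply IHtyping2. intros v hv.
    destruct (var_eq_dec v x) as [-> | nx]; auto.
    destruct (var_eq_dec v y) as [-> | ny]; auto.
    apply hfv; right. rewrite !in_filter_neq_var; auto.
  - auto.
Qed.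

Theorem lemma4p3 :
  (forall (G : ctx) (t : tm), typing G t TDiamond -> G <> nil) /\
  (forall t : tm, ~ typing nil t TDiamond) /\
  (forall (G : ctx) (t : tm), typing G t TDiamond -> fv t <> nil).
Proof.
  assert (fv_nonempty : forall G t, typing G t TDiamond -> fv t <> nil).
  { intros G t ht hnil. apply (typing_sound G t TDiamond ht).
    rewrite hnil. intros v []. }
  assert (ctx_nonempty : forall G t, typing G t TDiamond -> G <> nil).
  { intros G t ht ->. apply (fv_nonempty nil t ht).
    apply incl_l_nil, (typing_fv_incl nil t TDiamond ht). }
  split; [exact ctx_nonempty | split; [| exact fv_nonempty]].
  intros t ht. exact (ctx_nonempty nil t ht eq_refl).
Qed.
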